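(* Let $\tau_1,\tau_2:[0,1]\to[0,1]$ be piecewise $C^1$ maps with $\tau_1\le\tau_2$ on $[0,1]$, and suppose that $\tau_1$ and $\tau_2$ possess absolutely continuous invariant probability measures with densities $f_1$ and $f_2$, respectively. Let $0<\lambda<1$ and $f=\lambda f_1+(1-\lambda)f_2$. Let $\boldsymbol\tau$ be a selector (a piecewise $C^1$ map $\boldsymbol\tau:[0,1]\to[0,1]$ with $\tau_1\le\boldsymbol\tau\le\tau_2$) that preserves the density $f$. Then there exists a measurable function $p:[0,1]\to[0,1]$ such that the position dependent random map $R=\{\tau_1,\tau_2;p,1-p\}$ also preserves $f$.
   Context: A position dependent random map $R=\{\tau_1,\tau_2;p,1-p\}$, where $p:[0,1]\to[0,1]$ is measurable, moves a point $x$ to $\tau_1(x)$ with probability $p(x)$ and to $\tau_2(x)$ with probability $1-p(x)$. A density $f$ is invariant (preserved) for $R$ if $P_{\tau_1}(pf)+P_{\tau_2}((1-p)f)=f$ a.e., where $P_{\tau_k}$ is the Frobenius–Perron operator of $\tau_k$ with respect to Lebesgue measure. *)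

From HB Require Import structures.
From mathcomp Require Import all_boot all_order all_algebra.
From mathcomp Require Import all_classical all_reals all_analysis.
Set Implicit Arguments. Unset Strict Implicit. Unset Printing Implicit Defensive.
Import Order.TTheory GRing.Theory Num.Theory.
Import numFieldNormedType.Exports.
Local Open Scope classical_set_scope.
Local Open Scope ring_scope.

Section Defs.
Variable R : realType.
Local Notation mu := (@lebesgue_measure R).

Definition I01 : set R := `[0, 1]%classic.

Definition maps_unit (tau : R -> R) : Prop := forall x, I01 x -> I01 (tau x).

(* Piecewise C^1 (Gora-Boyarsky): there is a partition 0 = a_0 < ... < a_n = 1
   such that on each open piece (a_i, a_{i+1}) tau coincides with a C^1 function
   (i.e. the restriction extends to a C^1 function on the closed piece). *)
Definition piecewise_C1 (tau : R -> R) : Prop :=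
  exists (n : nat) (a : nat -> R),
    a 0%N = 0 /\ a n = 1 /\ (forall i, (i < n)%N -> a i < a i.+1) /\
    forall i, (i < n)%N -> exists g : R -> R,
      (forall x, derivable g x 1) /\ continuous (derive1 g) /\
      (forall x, a i < x < a i.+1 -> tau x = g x).

Definition density (f : R -> R) : Prop :=
  measurable_fun I01 f /\ (forall x, I01 x -> 0 <= f x) /\
  (\int[mu]_(x in I01) (f x)%:E = 1)%E.

(* g = P_tau h : the Frobenius-Perron operator of tau (w.r.t. Lebesgue measure
   on [0,1]) applied to h equals g, i.e. g is the (a.e. unique) integrable
   function with  int_A g = int_{tau^-1 A} h  for every measurable A in [0,1]. *)
Definition FP_image (tau : R -> R) (h g : R -> R) : Prop :=
  mu.-integrable I01 (EFin \o g) /\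
  forall A : set R, measurable A -> A `<=` I01 ->
    (\int[mu]_(x in A) (g x)%:E = \int[mu]_(x in I01 `&` tau @^-1` A) (h x)%:E)%E.

Definition preserves (tau : R -> R) (f : R -> R) : Prop := FP_image tau f f.

Definition acim_density (tau : R -> R) (f : R -> R) : Prop :=
  density f /\ preserves tau f.

(* The position dependent random map {tau1, tau2; p, 1-p} preserves f :
   P_tau1 (p f) + P_tau2 ((1-p) f) = f  a.e. on [0,1]. *)
Definition random_preserves (tau1 tau2 p f : R -> R) : Prop :=
  exists g1 g2 : R -> R,
    FP_image tau1 (fun x => p x * f x) g1 /\
    FP_image tau2 (fun x => (1 - p x) * f x) g2 /\
    {ae mu, forall x, I01 x -> g1 x + g2 x = f x}.
End Defs.

(* Put p := lambda f1 / f (with p := 0 where f vanishes).  Then p f = lambda f1 and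
   (1 - p) f = (1 - lambda) f2 on [0,1], and since the Frobenius-Perron operator is
   positively homogeneous, P_tau1 (p f) + P_tau2 ((1 - p) f)
   = lambda f1 + (1 - lambda) f2 = f. *)
From HB Require Import structures.
From mathcomp Require Import all_boot all_order all_algebra.
From mathcomp Require Import all_classical all_reals all_analysis.
Set Implicit Arguments. Unset Strict Implicit. Unset Printing Implicit Defensive.
Import Order.TTheory GRing.Theory Num.Theory.
Import numFieldNormedType.Exports.
Local Open Scope classical_set_scope.
Local Open Scope ring_scope.

Lemma measurable_inv (R : realType) : measurable_fun setT (@GRing.inv R).
Proof.
have -> : @setT R = [set 0] `|` ~` [set 0] by rewrite setUv.
apply/measurable_funU => //; first exact: measurableC.
split.
  move=> _ B mB.
  have [B0|B0] := pselect (B (0:R)^-1).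
    rewrite (_ : _ `&` _ = [set 0]) //; apply/seteqP; split => [x [->]//|x ->]//.
  rewrite (_ : _ `&` _ = set0) //; apply/seteqP; split => [x [-> ]//|x]//.
apply: measurable_realfun.open_continuous_measurable_fun.
  rewrite openC; exact/accessible_closed_set1/hausdorff_accessible/norm_hausdorff.
move=> x; rewrite inE /= => /eqP x0; exact: inv_continuous.
Qed.

(* The library's [ge0_integralZl] assumes measurability; the preimages [tau @^-1` A]
   below need not be measurable, so we go back to the definition of the integral of
   a nonnegative function as a supremum over simple functions. *)
Section ge0_integralZl_nonmeasurable.
Local Open Scope ereal_scope.
Import HBNNSimple.
Context d (T : measurableType d) (R : realType) (mu : {measure set T -> \bar R}).

Lemma sup_sintegral_scale_le (k : R) (g G : T -> \bar R) : (0 < k)%R ->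
  (forall x, G x = k%:E * g x) ->
  ereal_sup [set sintegral mu h | h in
    [set h : {nnsfun T >-> R} | forall x, (h x)%:E <= G x]]
  <= k%:E * ereal_sup [set sintegral mu h | h in
    [set h : {nnsfun T >-> R} | forall x, (h x)%:E <= g x]].
Proof.
move=> k0 GE; apply: ge_ereal_sup => _ [h hle <-].
have ki0 : (0 <= k^-1)%R by rewrite invr_ge0 ltW.
pose h' := scale_nnsfun h ki0.
have -> : sintegral mu h = k%:E * sintegral mu h'.
  rewrite -sintegralrM; apply: eq_sintegral => x /=.
  by rewrite mulrA mulfV ?mul1r// gt_eqF.
apply: lee_wpmul2l; first by rewrite lee_fin ltW.
apply: ereal_sup_ubound; exists h' => // x /=.
rewrite EFinM -(@lee_pmul2l _ k%:E) ?lte_fin//.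
by rewrite muleA -EFinM mulfV ?gt_eqF// mul1r -GE hle.
Qed.

Lemma ge0_integralZl_nonmeasurable (D : set T) (f : T -> \bar R) (k : R) :
  (0 < k)%R -> (forall x, D x -> 0 <= f x) ->
  \int[mu]_(x in D) (k%:E * f x) = k%:E * \int[mu]_(x in D) f x.
Proof.
move=> k0 f0.
rewrite !ge0_integralE//; last first.
  by move=> x Dx; apply: mule_ge0; [rewrite lee_fin ltW|exact: f0].
rewrite erestrict_scale; set g := f \_ D.
apply/eqP; rewrite eq_le (@sup_sintegral_scale_le k g _ k0)//=.
have ki0 : (0 < k^-1)%R by rewrite invr_gt0.
rewrite -(@lee_pmul2l _ k^-1%:E) ?lte_fin// muleA -EFinM mulVf ?gt_eqF// mul1e.
apply: (@sup_sintegral_scale_le k^-1 (fun x => k%:E * g x) g ki0) => x.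
by rewrite muleA -EFinM mulVf ?gt_eqF// mul1e.
Qed.

End ge0_integralZl_nonmeasurable.

Section FP_image.
Context (R : realType) (tau : R -> R).
Local Notation mu := (@lebesgue_measure R).

Lemma FP_imageZ (k : R) (h g : R -> R) : 0 < k ->
  (forall x, I01 x -> 0 <= h x) -> FP_image tau h g ->
  FP_image tau (fun x => k * h x) (fun x => k * g x).
Proof.
move=> k0 h0 [intg Pg]; have mI : measurable (@I01 R) by exact: measurable_itv.
split.
  rewrite (_ : EFin \o _ = fun x => (k%:E * (EFin \o g) x)%E).
    exact: integrableZl.
  by apply/funext => x /=; rewrite EFinM.
move=> A mA AI; under eq_integral do rewrite EFinM.
rewrite integralZl//; last exact: integrableS intg.
under [RHS]eq_integral do rewrite EFinM.
rewrite ge0_integralZl_nonmeasurable//; last by move=> x [/h0 ? _]; rewrite lee_fin.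
by rewrite Pg.
Qed.

Lemma eq_FP_image (h h' g : R -> R) : (forall x, I01 x -> h x = h' x) ->
  FP_image tau h g -> FP_image tau h' g.
Proof.
move=> hh' [intg Pg]; split => // A mA AI; rewrite Pg//.
by apply: eq_integral => x; rewrite inE => -[Ix _]; rewrite hh'.
Qed.

End FP_image.

Section mixing_weight.
Context (R : realType) (l a b : R).
Hypotheses (l01 : 0 < l < 1) (a0 : 0 <= a) (b0 : 0 <= b).

(* Equal to [0] where [l * a + (1 - l) * b] vanishes, as division by zero gives [0]. *)
Definition mixing_weight := l * a / (l * a + (1 - l) * b).

Let la0 : 0 <= l * a.
Proof. by case/andP: l01 => l0 _; rewrite mulr_ge0// ltW. Qed.

Let lb0 : 0 <= (1 - l) * b.
Proof. by case/andP: l01 => _ l1; rewrite mulr_ge0// subr_ge0 ltW. Qed.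

Lemma mixing_weightM : mixing_weight * (l * a + (1 - l) * b) = l * a.
Proof.
rewrite /mixing_weight.
have [/eqP|F0] := eqVneq (l * a + (1 - l) * b) 0; last by rewrite mulfVK.
by rewrite paddr_eq0// => /andP[/eqP -> /eqP ->]; rewrite !mul0r.
Qed.

Lemma mixing_weightCM :
  (1 - mixing_weight) * (l * a + (1 - l) * b) = (1 - l) * b.
Proof. by rewrite mulrBl mul1r mixing_weightM addrAC subrr add0r. Qed.

Lemma mixing_weight_itv : 0 <= mixing_weight <= 1.
Proof.
rewrite /mixing_weight divr_ge0 ?addr_ge0//=.
have [->|F0] := eqVneq (l * a + (1 - l) * b) 0; first by rewrite invr0 mulr0.
have Fp : 0 < l * a + (1 - l) * b by rewrite lt_def F0 addr_ge0.
by rewrite ler_pdivrMr// mul1r lerDl.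
Qed.

End mixing_weight.

Lemma measurable_mixing_weight (R : realType) (l : R) (f1 f2 : R -> R) :
  measurable_fun (@I01 R) f1 -> measurable_fun (@I01 R) f2 ->
  measurable_fun (@I01 R) (fun x => mixing_weight l (f1 x) (f2 x)).
Proof.
move=> mf1 mf2; rewrite /mixing_weight.
apply: measurable_realfun.measurable_funM.
  by apply: measurable_realfun.measurable_funM => //; exact: measurable_cst.
apply: measurableT_comp; first exact: measurable_inv.
by apply: measurable_realfun.measurable_funD;
  apply: measurable_realfun.measurable_funM => //; exact: measurable_cst.
Qed.

Theorem corollary1 (R : realType) (tau1 tau2 tau f1 f2 : R -> R) (lambda : R) :
  maps_unit tau1 -> maps_unit tau2 ->
  piecewise_C1 tau1 -> piecewise_C1 tau2 ->
  (forall x, I01 x -> tau1 x <= tau2 x) ->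
  acim_density tau1 f1 -> acim_density tau2 f2 ->
  0 < lambda < 1 ->
  maps_unit tau -> piecewise_C1 tau ->
  (forall x, I01 x -> tau1 x <= tau x <= tau2 x) ->
  preserves tau (fun x => lambda * f1 x + (1 - lambda) * f2 x) ->
  exists p : R -> R,
    measurable_fun (@I01 R) p /\ (forall x, I01 x -> I01 (p x)) /\
    random_preserves tau1 tau2 p (fun x => lambda * f1 x + (1 - lambda) * f2 x).
Proof.
move=> _ _ _ _ _ [[mf1 [f10 _]] Pf1] [[mf2 [f20 _]] Pf2] l01 _ _ _ _.
have /andP[l0 l1] := l01.
pose p x := mixing_weight lambda (f1 x) (f2 x).
exists p; split; first exact: measurable_mixing_weight.
split.
  move=> x Ix; have := mixing_weight_itv l01 (f10 x Ix) (f20 x Ix).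
  by rewrite /I01 /= in_itv.
exists (fun x => lambda * f1 x), (fun x => (1 - lambda) * f2 x); split; [|split].
- apply: eq_FP_image (FP_imageZ l0 f10 Pf1) => x Ix.
  by rewrite (mixing_weightM l01 (f10 x Ix) (f20 x Ix)).
- apply: eq_FP_image (FP_imageZ _ f20 Pf2) => [x Ix|]; last by rewrite subr_gt0.
  by rewrite (mixing_weightCM l01 (f10 x Ix) (f20 x Ix)).
- by apply: aeW => x Ix.
Qed.
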